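(* Let $X$ be a compact metric space, $(f_n)_{n\ge1}$ a sequence of continuous maps $X\to X$, and $(k_n)_{n\ge1}$ a strictly increasing sequence of positive integers. Define $\hat f_1=f_{k_1}\circ\cdots\circ f_1$ and $\hat f_n=f_{k_n}\circ\cdots\circ f_{k_{n-1}+1}$ for $n\ge2$, and let $\gamma\colon\mathbb{N}\to\mathbb{N}$, $\gamma(n)=k_n$. If $p,q\in\mathbb{N}^*$ and $\overline{\gamma}(q)=p$, then $\hat f_1^q=f_1^p$. In particular $E(X,\hat f_{1,\infty})\subseteq E(X,f_{1,\infty})$.
   Context: $\mathbb{N}=\{1,2,3,\dots\}$, $\beta(\mathbb{N})$ the ultrafilters on $\mathbb{N}$ (principal ones identified with elements of $\mathbb{N}$), $\mathbb{N}^*$ the free ones. For $p\in\mathbb{N}^*$, $p\text{-}\lim_n x_n$ is the unique $y$ with $\{n:x_n\in V\}\in p$ for all neighbourhoods $V$ of $y$. For a sequence $(g_n)$ of continuous self-maps of $X$: $g_1^n=g_n\circ\cdots\circ g_1$, $g_1^p(x)=p\text{-}\lim_n g_1^n(x)$ for $p\in\mathbb{N}^*$, and $E(X,g_{1,\infty})$ is the closure of $\{g_1^n:n\in\mathbb{N}\}$ in $X^X$ (pointwise topology). $\overline{\gamma}$ is the Stone extension of $\gamma$: $\overline{\gamma}(q)=\{A\subseteq\mathbb{N}:\gamma^{-1}(A)\in q\}$. *)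

From HB Require Import structures.
From mathcomp Require Import all_boot all_order all_algebra.
From mathcomp Require Import all_classical all_reals all_analysis.
Set Implicit Arguments. Unset Strict Implicit. Unset Printing Implicit Defensive.
Import Order.TTheory GRing.Theory Num.Theory.
Local Open Scope classical_set_scope.

Definition is_ultrafilter (p : set (set nat)) : Prop :=
  [/\ p setT, ~ p set0,
      (forall A B, p A -> p B -> p (A `&` B)),
      (forall A B, A `<=` B -> p A -> p B) &
      (forall A, p A \/ p (~` A))].

(* free (non-principal) ultrafilters: elements of N^* *)
Definition free_ultrafilter (p : set (set nat)) : Prop :=
  is_ultrafilter p /\ (forall A : set nat, finite_set A -> ~ p A).

Definition is_plim {X : topologicalType} (p : set (set nat)) (u : nat -> X) (y : X) : Prop :=
  forall V, nbhs y V -> p [set n | V (u n)].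

Definition plim {X : topologicalType} (p : set (set nat)) (u : nat -> X) : X :=
  xget (u 0%N) [set y | is_plim p u y].

Fixpoint iter_seq {X : Type} (g : nat -> X -> X) (n : nat) (x : X) : X :=
  match n with
  | 0 => x
  | m.+1 => g m.+1 (iter_seq g m x)
  end.

Fixpoint blk {X : Type} (g : nat -> X -> X) (a l : nat) (x : X) : X :=
  match l with
  | 0 => x
  | m.+1 => g (a + m.+1)%N (blk g a m x)
  end.

Definition kprev (k : nat -> nat) (n : nat) : nat := if (n <= 1)%N then 0%N else k n.-1.

(* hat f_n = f_(k_n) o ... o f_(k_(n-1)+1), with k_0 := 0, i.e. hat f_1 = f_(k_1) o ... o f_1 *)
Definition hatf {X : Type} (f : nat -> X -> X) (k : nat -> nat) (n : nat) : X -> X :=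
  blk f (kprev k n) (k n - kprev k n).

(* Stone extension of gamma = k (restricted to N = {1,2,...}) *)
Definition stone_ext (k : nat -> nat) (q : set (set nat)) : set (set nat) :=
  [set A | q [set n | (0 < n)%N /\ A (k n)]].

(* E(X, g_{1,oo}) : closure of {g_1^n : n >= 1} in X^X with the pointwise topology *)
Definition Eclos {X : topologicalType} (g : nat -> X -> X) : set {ptws X -> X} :=
  closure ([set iter_seq g n | n in [set n : nat | (0 < n)%N]] : set {ptws X -> X}).

From HB Require Import structures.
From mathcomp Require Import all_boot all_order all_algebra.
From mathcomp Require Import all_classical all_reals all_analysis.
Import Order.TTheory GRing.Theory Num.Theory.
Local Open Scope classical_set_scope.

(* Composing the blocks, the n-th iterate of the maps hat f_n is the k_n-th
   iterate of the f_n, so the hat orbit of x is the f orbit sampled along k.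
   Since stone_ext k q is the image of q under k, a q-limit of the sampled
   orbit is a (stone_ext k q)-limit of the full orbit. Compactness provides
   these limits and the Hausdorff property makes them unique. The inclusion of
   the enveloping semigroups holds already before taking closures. *)

Lemma blk_iter_seq {X : Type} (g : nat -> X -> X) a l x :
  blk g a l (iter_seq g a x) = iter_seq g (a + l) x.
Proof. by elim: l => [|l IH] /=; rewrite ?addn0 // IH addnS. Qed.

Lemma iter_seq_hatf {X : Type} (f : nat -> X -> X) (k : nat -> nat) :
  (forall n, (0 < n)%N -> (k n <= k n.+1)%N) ->
  forall n x, (0 < n)%N -> iter_seq (hatf f k) n x = iter_seq f (k n) x.
Proof.
move=> k_homo; elim=> [//|[|n] IH] x _.
  by rewrite /= /hatf /kprev /= subn0 -(blk_iter_seq f 0).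
change (hatf f k n.+2 (iter_seq (hatf f k) n.+1 x) = iter_seq f (k n.+2) x).
rewrite IH // /hatf /kprev /= blk_iter_seq subnKC //.
exact: k_homo.
Qed.

Lemma incr_gt0 (k : nat -> nat) :
  (0 < k 1)%N -> (forall n, (0 < n)%N -> (k n < k n.+1)%N) ->
  forall n, (0 < n)%N -> (0 < k n)%N.
Proof.
move=> k1_gt0 k_incr; elim=> [//|[|n] IH] _ //.
exact: leq_trans (IH isT) (ltnW (k_incr n.+1 isT)).
Qed.

Lemma is_ultrafilter_proper {p : set_system nat} :
  is_ultrafilter p -> ProperFilter p.
Proof. by case=> *; split=> //; split. Qed.

Lemma UltraFilter_setVsetC {T : Type} (F : set_system T) :
  ProperFilter F -> (forall A, F A \/ F (~` A)) -> UltraFilter F.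
Proof.
move=> PF FVC; apply: Build_UltraFilter => // G PG FG.
apply/funext => A; apply/propext; split; last exact: FG.
move=> GA; case: (FVC A) => // /FG GCA; exfalso.
by apply: (@filter_not_empty _ G); rewrite -(setICr A); exact: filterI.
Qed.

Lemma is_ultrafilter_fmap {X : Type} {p : set_system nat} (u : nat -> X) :
  is_ultrafilter p -> UltraFilter (fmap u p).
Proof.
move=> up; have PFp := is_ultrafilter_proper up.
apply: UltraFilter_setVsetC => A; case: up => _ _ _ _ pVC.
exact: (pVC (u @^-1` A)).
Qed.

Lemma plim_exists {X : topologicalType} {p : set_system nat} (u : nat -> X) :
  compact [set: X] -> is_ultrafilter p -> exists y, is_plim p u y.
Proof.
move=> cX up; have UF := is_ultrafilter_fmap u up.
have PF := @ultra_proper _ _ UF.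
rewrite compact_ultra in cX.
by have [y [_ uy]] := cX _ UF filterT; exists y.
Qed.

Lemma plimE {X : topologicalType} {p : set_system nat} {u : nat -> X} {y : X} :
  hausdorff_space X -> is_ultrafilter p -> is_plim p u y -> plim p u = y.
Proof.
move=> sX up uy; have PFp := is_ultrafilter_proper up.
by apply: xget_unique => // z uz; exact: (cvg_unique sX uz uy).
Qed.

Lemma free_ultrafilter_gt0 {q : set_system nat} :
  free_ultrafilter q -> q [set n | (0 < n)%N].
Proof.
case=> -[_ _ _ qS qVC] q_free; case: (qVC [set 0%N]) => [/(q_free _ (finite_set1 0%N))//|].
by apply: qS => n n_neq0 /=; rewrite lt0n; apply/eqP.
Qed.

Lemma is_plim_stone_ext {X : topologicalType} {q : set_system nat} {k : nat -> nat}
    {u v : nat -> X} {y : X} :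
  Filter q -> q [set n | (0 < n)%N] ->
  (forall n, (0 < n)%N -> v n = u (k n)) ->
  is_plim q v y -> is_plim (stone_ext k q) u y.
Proof.
move=> Fq q_gt0 vE vy V yV; rewrite /stone_ext /=.
apply: filterS (filterI q_gt0 (vy V yV)) => n [n_gt0 Vvn].
by split=> //; rewrite -vE.
Qed.

Theorem theorem2p8 (R : realType) (X : pseudoMetricType R)
  (f : nat -> X -> X) (k : nat -> nat) :
  hausdorff_space X -> compact [set: X] ->
  (forall n, (0 < n)%N -> continuous (f n)) ->
  (0 < k 1)%N -> (forall n, (0 < n)%N -> (k n < k n.+1)%N) ->
  forall p q : set (set nat), free_ultrafilter p -> free_ultrafilter q ->
  stone_ext k q = p ->
  (forall x : X, plim q (fun n => iter_seq (hatf f k) n x) = plim p (fun n => iter_seq f n x))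
  /\ Eclos (hatf f k) `<=` Eclos f.
Proof.
move=> sX cX _ k1_gt0 k_incr p q [up _] fq pE.
have k_homo n (n_gt0 : (0 < n)%N) : (k n <= k n.+1)%N := ltnW (k_incr n n_gt0).
have uq := fq.1.
split=> [x|].
  have [y hat_y] := plim_exists (fun n => iter_seq (hatf f k) n x) cX uq.
  have f_y : is_plim p (fun n => iter_seq f n x) y.
    rewrite -pE; apply: (is_plim_stone_ext (is_ultrafilter_proper uq))
      (free_ultrafilter_gt0 fq) _ hat_y.
    by move=> n; exact: iter_seq_hatf.
  by rewrite (plimE sX uq hat_y) (plimE sX up f_y).
apply: closureS => _ [n n_gt0 <-]; exists (k n); first exact: incr_gt0.
by apply/funext => x; rewrite iter_seq_hatf.
Qed.
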